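(* Let $P$ be a conical refinement monoid containing order-ideals $I,I'$ with $I\cap I'=0$, and let $\varphi\colon I\to I'$ be a monoid isomorphism. Let $Q$ be the crowned pushout of $(P,I,I',\varphi)$. Then $Q=P/\!\sim$, where $\sim$ is the congruence on $P$ generated by $x+i\sim x+\varphi(i)$ for $i\in I$, $x\in P$, with the coequalizing map the canonical projection $\pi\colon P\to Q$. Moreover $Q$ is a conical refinement monoid, and $Q$ contains an order-ideal $Z$ isomorphic to $I$ such that $\pi$ induces an isomorphism $P/(I+I')\cong Q/Z$.
   Context: Monoids are abelian; conical means $x+y=0\Rightarrow x=y=0$; refinement monoid means every $x_1+x_2=y_1+y_2$ admits $x_{ij}$ with $x_i=x_{i1}+x_{i2}$, $y_j=x_{1j}+x_{2j}$. An order-ideal is a nonempty $I\subseteq P$ with $x+y\in I\iff x,y\in I$; $P/I$ denotes the quotient by $x\equiv y\iff x+u=y+v$ for some $u,v\in I$. The crowned pushout of $(P,I,I',\varphi)$ is the coequalizer, in the category of monoids, of the inclusion $I\to P$ and the composite $I\xrightarrow{\varphi}I'\hookrightarrow P$: a homomorphism $f\colon P\to Q$ with $f(x)=f(\varphi(x))$ for all $x\in I$, through which every homomorphism $g$ with $g(x)=g(\varphi(x))$ ($x\in I$) factors uniquely. *)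

From HB Require Import structures.
From mathcomp Require Import all_boot all_algebra.
Set Implicit Arguments. Unset Strict Implicit. Unset Printing Implicit Defensive.
Import GRing.Theory.
Local Open Scope ring_scope.

Definition is_monoid_hom (M N : nmodType) (f : M -> N) : Prop :=
  f 0 = 0 /\ forall x y, f (x + y) = f x + f y.

Definition conical (M : nmodType) : Prop :=
  forall x y : M, x + y = 0 -> x = 0 /\ y = 0.

Definition refinement_monoid (M : nmodType) : Prop :=
  forall x1 x2 y1 y2 : M, x1 + x2 = y1 + y2 ->
    exists x11 x12 x21 x22 : M,
      [/\ x1 = x11 + x12, x2 = x21 + x22, y1 = x11 + x21 & y2 = x12 + x22].

Definition order_ideal (M : nmodType) (I : M -> Prop) : Prop :=
  (exists x, I x) /\ forall x y : M, I (x + y) <-> (I x /\ I y).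

(* the congruence x == y (mod I) : x + u = y + v for some u, v in I,
   i.e. the relation defining M/I *)
Definition quot_rel (M : nmodType) (I : M -> Prop) (x y : M) : Prop :=
  exists u v, I u /\ I v /\ x + u = y + v.

Definition ideal_sum (M : nmodType) (I I' : M -> Prop) (x : M) : Prop :=
  exists i i', I i /\ I' i' /\ x = i + i'.

Definition monoid_iso_on (M N : nmodType) (I : M -> Prop) (J : N -> Prop)
  (phi : M -> N) : Prop :=
  [/\ forall x, I x -> J (phi x),
      phi 0 = 0,
      forall x y, I x -> I y -> phi (x + y) = phi x + phi y,
      forall x y, I x -> I y -> phi x = phi y -> x = y
    & forall z, J z -> exists2 x, I x & phi x = z].

(* f : P -> Q is the crowned pushout (coequalizer of I -> P and
   I --phi--> I' -> P in the category of abelian monoids) *)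
Definition crowned_pushout (P : nmodType) (I : P -> Prop) (phi : P -> P)
  (Q : nmodType) (f : P -> Q) : Prop :=
  [/\ is_monoid_hom f,
      forall x, I x -> f x = f (phi x)
    & forall (R : nmodType) (g : P -> R), is_monoid_hom g ->
        (forall x, I x -> g x = g (phi x)) ->
        exists! h : Q -> R, is_monoid_hom h /\ forall x, g x = h (f x)].

Inductive crowned_cong (P : nmodType) (I : P -> Prop) (phi : P -> P) :
  P -> P -> Prop :=
| cc_base x i : I i -> crowned_cong I phi (x + i) (x + phi i)
| cc_refl x : crowned_cong I phi x x
| cc_sym x y : crowned_cong I phi x y -> crowned_cong I phi y x
| cc_trans x y z : crowned_cong I phi x y -> crowned_cong I phi y z ->
    crowned_cong I phi x z
| cc_add x y x' y' : crowned_cong I phi x y -> crowned_cong I phi x' y' ->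
    crowned_cong I phi (x + x') (y + y').

From HB Require Import structures.
From mathcomp Require Import all_boot all_algebra.
From Stdlib Require Import ClassicalEpsilon FunctionalExtensionality PropExtensionality.
Set Implicit Arguments. Unset Strict Implicit.
Import GRing.Theory.
Local Open Scope ring_scope.

(* Comparing the crowned
      pushout with the quotient by ~ through the universal property shows
      that the pushout map pi is onto and that its kernel is exactly ~.
   2. Because I and I' are disjoint order-ideals, I + I' is a direct sum and
      the "folding" map I + I' -> I, i + phi j |-> i + j, is a well-defined
      homomorphism.  The congruence ~ then has the explicit description
      x ~ y  iff  x = z + u and y = z + v with u, v in I + I' of equal fold;
      refinement in P is what makes this relation transitive.
   3. From the explicit description and refinement in P we read off that Q
      is conical and refining, that Z = pi(I) is an order-ideal of Q onto
      which pi maps I isomorphically, and that P/(I + I') = Q/Z. *)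

Record congruence (M : nmodType) := Congruence {
  cong_rel :> M -> M -> Prop;
  cong_refl : forall x, cong_rel x x;
  cong_sym : forall x y, cong_rel x y -> cong_rel y x;
  cong_trans : forall x y z, cong_rel x y -> cong_rel y z -> cong_rel x z;
  cong_add : forall x y x' y',
    cong_rel x y -> cong_rel x' y' -> cong_rel (x + x') (y + y') }.

Definition crowned_congruence (P : nmodType) (I : P -> Prop) (phi : P -> P) :
  congruence P :=
  Congruence (@cc_refl P I phi) (@cc_sym P I phi) (@cc_trans P I phi)
    (@cc_add P I phi).

Section CongruenceQuotient.
Variables (M : nmodType) (r : congruence M).

Definition cong_repr (x : M) : M := epsilon (inhabits 0) (r x).

Lemma cong_repr_spec x : r x (cong_repr x).
Proof. by apply: epsilon_spec; exists x; apply: cong_refl. Qed.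

Lemma cong_repr_eq x y : cong_repr x = cong_repr y <-> r x y.
Proof.
split=> [e | rxy].
  apply: cong_trans (cong_repr_spec x) _; rewrite e.
  exact/cong_sym/cong_repr_spec.
rewrite /cong_repr; congr epsilon.
apply: functional_extensionality => z; apply: propositional_extensionality.
split; [exact: cong_trans (cong_sym rxy) | exact: cong_trans rxy].
Qed.

Lemma cong_reprK x : cong_repr (cong_repr x) = cong_repr x.
Proof. exact/cong_repr_eq/cong_sym/cong_repr_spec. Qed.

(* The quotient monoid M/r, realised as the set of chosen representatives. *)
Definition cong_quot := {x : M | cong_repr x == x}.

HB.instance Definition _ := Choice.on cong_quot.

Definition cong_class (x : M) : cong_quot :=
  exist _ (cong_repr x) (introT eqP (cong_reprK x)).

Lemma cong_classK (a : cong_quot) : cong_class (val a) = a.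
Proof. by apply: val_inj => /=; apply/eqP; case: a. Qed.

Lemma cong_class_eq x y : cong_class x = cong_class y <-> r x y.
Proof.
rewrite -cong_repr_eq; split; first by move/(congr1 val).
by move=> e; apply: val_inj.
Qed.

Definition cong_quot_add (a b : cong_quot) := cong_class (val a + val b).

Lemma cong_classD x y :
  cong_class (x + y) = cong_quot_add (cong_class x) (cong_class y).
Proof. by apply/cong_class_eq/cong_add; apply: cong_repr_spec. Qed.

Lemma cong_quot_addA : associative cong_quot_add.
Proof.
move=> a b c; rewrite -[a]cong_classK -[b]cong_classK -[c]cong_classK.
by rewrite -!cong_classD addrA.
Qed.

Lemma cong_quot_addC : commutative cong_quot_add.
Proof. by move=> a b; rewrite /cong_quot_add addrC. Qed.

Lemma cong_quot_add0 : left_id (cong_class 0) cong_quot_add.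
Proof. by move=> a; rewrite -[a]cong_classK -cong_classD add0r. Qed.

HB.instance Definition _ :=
  GRing.isNmodule.Build cong_quot cong_quot_addA cong_quot_addC cong_quot_add0.

Lemma cong_class_hom : is_monoid_hom cong_class.
Proof. by split=> // x y; rewrite cong_classD. Qed.

End CongruenceQuotient.

Lemma coequalizer_respects_cong (P R : nmodType) (I : P -> Prop) (phi : P -> P)
    (g : P -> R) :
  is_monoid_hom g -> (forall i, I i -> g i = g (phi i)) ->
  forall x y, crowned_cong I phi x y -> g x = g y.
Proof.
move=> [_ gD] gcoeq x y; elim=> {x y}.
- by move=> x i Ii; rewrite !gD (gcoeq _ Ii).
- by [].
- by move=> x y _ ->.
- by move=> x y z _ -> _ ->.
- by move=> x y x' y' _ e _ e'; rewrite !gD e e'.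
Qed.

(* Both facts come from comparing it with the explicit quotient monoid. *)
Lemma crowned_pushout_quotient (P : nmodType) (I : P -> Prop) (phi : P -> P)
    (Q : nmodType) (pi : P -> Q) :
  crowned_pushout I phi pi ->
  (forall q, exists x, pi x = q) /\
  (forall x y, pi x = pi y <-> crowned_cong I phi x y).
Proof.
move=> [pi_hom pi_coeq pi_univ].
pose r := crowned_congruence I phi.
have class_coeq i : I i -> cong_class r i = cong_class r (phi i).
  by move=> Ii; apply/cong_class_eq; have := cc_base phi 0 Ii; rewrite !add0r.
have [h [[h_hom pi_h] _]] := pi_univ _ _ (cong_class_hom r) class_coeq.
have pi_cong := coequalizer_respects_cong pi_hom pi_coeq.
pose k (a : cong_quot r) := pi (val a).
have k_class x : k (cong_class r x) = pi x.
  exact/pi_cong/cc_sym/(cong_repr_spec r).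
have k_hom : is_monoid_hom k.
  split; first by rewrite -[0]/(cong_class r 0) k_class; case: pi_hom.
  move=> a b; rewrite -[a]cong_classK -[b]cong_classK -(proj2 (cong_class_hom r)).
  by rewrite !k_class; case: pi_hom.
split; last first.
  move=> x y; split; last exact: pi_cong.
  by move=> e; apply/(cong_class_eq r); rewrite !pi_h e.
(* h is a section of k, since both id and k \o h factor pi through itself. *)
have [h0 [_ h0_uniq]] := pi_univ _ _ pi_hom pi_coeq.
have h0_id : h0 = id by apply: h0_uniq; do !split.
have h0_kh : h0 = (fun q => k (h q)).
  apply: h0_uniq; split=> [|x]; last by rewrite -pi_h k_class.
  split=> [|a b]; first by rewrite (proj1 h_hom) (proj1 k_hom).
  by rewrite (proj2 h_hom) (proj2 k_hom).
have kh q : k (h q) = q by rewrite -[RHS]/(id q) -h0_id h0_kh.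
by move=> q; exists (val (h q)); apply: kh.
Qed.

Lemma order_ideal0 (M : nmodType) (J : M -> Prop) : order_ideal J -> J 0.
Proof. by case=> [[x Jx] JD]; have /JD[] : J (x + 0) by rewrite addr0. Qed.

Lemma order_idealD (M : nmodType) (J : M -> Prop) x y :
  order_ideal J -> J x -> J y -> J (x + y).
Proof. by case=> _ JD Jx Jy; apply/JD. Qed.

Lemma order_idealL (M : nmodType) (J : M -> Prop) x y :
  order_ideal J -> J (x + y) -> J x.
Proof. by case=> _ JD /JD[]. Qed.

Lemma order_idealR (M : nmodType) (J : M -> Prop) x y :
  order_ideal J -> J (x + y) -> J y.
Proof. by case=> _ JD /JD[]. Qed.

Section Folding.
Variables (P : nmodType) (I I' : P -> Prop) (phi : P -> P).
Hypotheses (hcon : conical P) (href : refinement_monoid P) (hI : order_ideal I)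
  (hI' : order_ideal I') (hdisj : forall x, I x -> I' x -> x = 0)
  (hphi : monoid_iso_on I I' phi).

Lemma phi_in x : I x -> I' (phi x).
Proof. by case: hphi => h _ _ _ _; apply: h. Qed.
Lemma phi0 : phi 0 = 0.
Proof. by case: hphi. Qed.
Lemma phiD x y : I x -> I y -> phi (x + y) = phi x + phi y.
Proof. by case: hphi => _ _ h _ _; apply: h. Qed.
Lemma phi_inj x y : I x -> I y -> phi x = phi y -> x = y.
Proof. by case: hphi => _ _ _ h _; apply: h. Qed.
Lemma phi_onto z : I' z -> exists2 x, I x & phi x = z.
Proof. by case: hphi => _ _ _ _ h; apply: h. Qed.

(* fold u k : u = i + phi j is an element of I + I' and k = i + j is its
   image under the folding map I + I' -> I, "identity on I, phi^-1 on I'". *)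
Definition fold (u k : P) : Prop :=
  exists i j, [/\ I i, I j, u = i + phi j & k = i + j].

(* Explicit form of the crowned congruence: x and y differ by elements of
   I + I' with the same folding. *)
Definition crowned_rel (x y : P) : Prop :=
  exists z u v k, [/\ fold u k, fold v k, x = z + u & y = z + v].

Lemma direct_sum_unique i j i' j' : I i -> I j -> I i' -> I j' ->
  i + phi j = i' + phi j' -> i = i' /\ j = j'.
Proof.
move=> Ii Ij Ii' Ij' e.
have [a [b [c [d [ei ej ei' ej']]]]] := href e.
have Ib : I b by apply: (order_idealR (x := a) hI); rewrite -ei.
have I'b : I' b by apply: (order_idealL (y := d) hI'); rewrite -ej'; apply: phi_in.
have Ic : I c by apply: (order_idealR (x := a) hI); rewrite -ei'.
have I'c : I' c by apply: (order_idealL (y := d) hI'); rewrite -ej; apply: phi_in.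
have [b0 c0] := (hdisj Ib I'b, hdisj Ic I'c).
split; first by rewrite ei ei' b0 c0 !addr0.
by apply: phi_inj => //; rewrite ej ej' b0 c0 !add0r.
Qed.

Lemma fold_fun u k k' : fold u k -> fold u k' -> k = k'.
Proof.
move=> [i [j [Ii Ij -> ->]]] [i' [j' [Ii' Ij' e ->]]].
by have [-> ->] := direct_sum_unique Ii Ij Ii' Ij' e.
Qed.

Lemma foldD u v k l : fold u k -> fold v l -> fold (u + v) (k + l).
Proof.
move=> [i [j [Ii Ij -> ->]]] [i' [j' [Ii' Ij' -> ->]]].
exists (i + i'), (j + j'); split; try exact: order_idealD.
  by rewrite phiD // addrACA.
by rewrite addrACA.
Qed.

Lemma fold_id k : I k -> fold k k.
Proof. by exists k, 0; rewrite phi0 addr0; split=> //; apply: order_ideal0. Qed.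

Lemma fold_phi k : I k -> fold (phi k) k.
Proof. by exists 0, k; rewrite !add0r; split=> //; apply: order_ideal0. Qed.

Lemma fold_ideal u k : fold u k -> I k.
Proof. by move=> [i [j [Ii Ij _ ->]]]; apply: order_idealD. Qed.

Lemma fold_idE u k : I u -> fold u k -> u = k.
Proof.
move=> Iu [i [j [Ii Ij eu ->]]].
have Iphij : I (phi j) by apply: (order_idealR (x := i) hI); rewrite -eu.
have phij0 : phi j = 0 by apply: hdisj Iphij (phi_in Ij).
have j0 : j = 0.
  by apply: phi_inj => //; [apply: order_ideal0 | rewrite phi0].
by rewrite eu phij0 j0 !addr0.
Qed.

Lemma fold_to0 u : fold u 0 -> u = 0.
Proof. by move=> [i [j [Ii Ij -> /esym/hcon[-> ->]]]]; rewrite phi0 addr0. Qed.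

Lemma fold_ideal_sum a w k : I a -> fold w k -> ideal_sum I I' (a + w).
Proof.
move=> Ia [i [j [Ii Ij -> _]]].
exists (a + i), (phi j).
by split; [exact: order_idealD | split; [exact: phi_in | exact: addrA]].
Qed.

Lemma fold_split c d k : fold (c + d) k ->
  exists kc kd, [/\ fold c kc, fold d kd & k = kc + kd].
Proof.
move=> [i [j [Ii Ij e ->]]].
have [i1 [i2 [p1 [p2 [ei ephij ec ed]]]]] := href (esym e).
have I'phij : I' (p1 + p2) by rewrite -ephij; apply: phi_in.
have [j1 Ij1 ej1] := phi_onto (order_idealL hI' I'phij).
have [j2 Ij2 ej2] := phi_onto (order_idealR hI' I'phij).
have ej : j = j1 + j2.
  by apply: phi_inj => //; [exact: order_idealD | rewrite phiD // ej1 ej2].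
have Ii1 : I i1 by apply: (order_idealL (y := i2) hI); rewrite -ei.
have Ii2 : I i2 by apply: (order_idealR (x := i1) hI); rewrite -ei.
exists (i1 + j1), (i2 + j2); split.
- by exists i1, j1; rewrite ec ej1.
- by exists i2, j2; rewrite ed ej2.
- by rewrite ei ej addrACA.
Qed.

(* Transitivity: refine the two decompositions of y and match their folds. *)
Lemma crowned_rel_trans x y w :
  crowned_rel x y -> crowned_rel y w -> crowned_rel x w.
Proof.
move=> [z [u [v [k [fu fv -> ->]]]]] [z' [u' [v' [k' [fu' fv' e ->]]]]].
have [a [b [c [d [ez ev ez' eu']]]]] := href e.
rewrite ev in fv; rewrite eu' in fu'.
have [kb [kd [fb fd ek]]] := fold_split fv.
have [kc [kd' [fc fd' ek']]] := fold_split fu'.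
rewrite -(fold_fun fd fd') in ek'.
exists a, (b + u), (c + v'), (kc + k); split.
- exact: foldD.
- by rewrite ek addrCA -ek'; apply: foldD.
- by rewrite ez addrA.
- by rewrite ez' addrA.
Qed.

Lemma crowned_congE x y : crowned_cong I phi x y <-> crowned_rel x y.
Proof.
split.
  elim=> {x y}.
  - move=> x i Ii; exists x, i, (phi i), i.
    by split; [apply: fold_id | apply: fold_phi |..].
  - have f00 : fold 0 0 := fold_id (order_ideal0 hI).
    by move=> x; exists x, 0, 0, 0; rewrite addr0.
  - by move=> x y _ [z [u [v [k [fu fv -> ->]]]]]; exists z, v, u, k.
  - by move=> x y w _ rxy _ ryw; apply: crowned_rel_trans rxy ryw.
  - move=> x y x' y' _ [z [u [v [k [fu fv -> ->]]]]].
    move=> _ [z' [u' [v' [k' [fu' fv' -> ->]]]]].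
    exists (z + z'), (u + u'), (v + v'), (k + k').
    by split; [exact: foldD | exact: foldD | exact: addrACA | exact: addrACA].
(* z + (i + phi j) ~ z + (i + j) = z + (i' + j') ~ z + (i' + phi j'). *)
move=> [z [u [v [k [[i [j [_ Ij -> ->]]] [i' [j' [_ Ij' -> e]]] -> ->]]]]].
apply: (@cc_trans _ _ _ _ (z + i + j)).
  by rewrite addrA; apply/cc_sym; apply: cc_base.
by rewrite -addrA e !addrA; apply: cc_base.
Qed.

(* Properties of any surjective homomorphism pi whose kernel congruence is
   crowned_rel; the crowned pushout will be such a map. *)
Section Image.
Variables (Q : nmodType) (pi : P -> Q).
Hypotheses (pi0 : pi 0 = 0) (piD : forall x y, pi (x + y) = pi x + pi y)
  (pi_surj : forall q, exists x, pi x = q)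
  (pi_eq : forall x y, pi x = pi y <-> crowned_rel x y).

Lemma pi_fold u k : fold u k -> pi u = pi k.
Proof.
move=> fu; apply/pi_eq; exists 0, u, k, k; rewrite !add0r; split=> //.
exact/fold_id/(fold_ideal fu).
Qed.

Definition image_ideal (q : Q) : Prop := exists2 i, I i & pi i = q.

Lemma image_ideal_sum s : ideal_sum I I' s -> image_ideal (pi s).
Proof.
move=> [a [a' [Ia [Ia' ->]]]]; have [j Ij <-] := phi_onto Ia'.
exists (a + j); first exact: order_idealD.
by apply/esym/pi_fold; exists a, j.
Qed.

Lemma image_split x1 x2 z u k : x1 + x2 = z + u -> fold u k ->
  exists z1 z2 k1 k2, [/\ pi x1 = pi (z1 + k1), pi x2 = pi (z2 + k2),
                          z = z1 + z2 & k = k1 + k2].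
Proof.
move=> e fu; have [z1 [u1 [z2 [u2 [-> -> ez eu]]]]] := href e.
rewrite eu in fu; have [k1 [k2 [fu1 fu2 ek]]] := fold_split fu.
exists z1, z2, k1, k2; split=> //.
- by rewrite !piD (pi_fold fu1).
- by rewrite !piD (pi_fold fu2).
Qed.

(* Q is conical: x1 + x2 ~ 0 forces x1 + x2 = 0 in the conical monoid P. *)
Lemma image_conical : conical Q.
Proof.
move=> q1 q2; have [x1 <-] := pi_surj q1; have [x2 <-] := pi_surj q2.
rewrite -piD -pi0 => /pi_eq[z [u [v [k [fu fv e /esym/hcon[z0 v0]]]]]].
have k0 : k = 0 by rewrite v0 in fv; apply: fold_fun fv (fold_id (order_ideal0 hI)).
rewrite z0 k0 in e fu; rewrite (fold_to0 fu) addr0 in e.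
by have [-> ->] := hcon e; rewrite pi0.
Qed.

(* Q is a refinement monoid: refine the I-parts and the folds separately. *)
Lemma image_refinement : refinement_monoid Q.
Proof.
move=> q1 q2 q3 q4.
have [x1 <-] := pi_surj q1; have [x2 <-] := pi_surj q2.
have [y1 <-] := pi_surj q3; have [y2 <-] := pi_surj q4.
rewrite -!piD => /pi_eq[z [u [v [k [fu fv ex ey]]]]].
have [z1 [z2 [k1 [k2 [-> -> ez ek]]]]] := image_split ex fu.
have [w1 [w2 [l1 [l2 [-> -> ez' ek']]]]] := image_split ey fv.
have [e11 [e12 [e21 [e22 [-> -> -> ->]]]]] := href (etrans (esym ez) ez').
have [f11 [f12 [f21 [f22 [-> -> -> ->]]]]] := href (etrans (esym ek) ek').
exists (pi (e11 + f11)), (pi (e12 + f12)), (pi (e21 + f21)), (pi (e22 + f22)).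
by split; rewrite addrACA piD.
Qed.

Lemma image_ideal_order_ideal : order_ideal image_ideal.
Proof.
split; first by exists 0, 0; [exact: order_ideal0 hI | exact: pi0].
move=> q1 q2; split; last first.
  by move=> [[i1 Ii1 <-] [i2 Ii2 <-]]; exists (i1 + i2); [exact: order_idealD|].
have [x1 <-] := pi_surj q1; have [x2 <-] := pi_surj q2.
move=> [i Ii]; rewrite -piD => /esym/pi_eq[z [u [v [k [fu fv ex ei]]]]].
have [z1 [z2 [k1 [k2 [-> -> ez ek]]]]] := image_split ex fu.
have Iz : I (z1 + z2) by rewrite -ez; apply: (order_idealL (y := v) hI); rewrite -ei.
have Ik : I (k1 + k2) by rewrite -ek; apply: fold_ideal fu.
split; [exists (z1 + k1) | exists (z2 + k2)] => //; apply: order_idealD hI _ _.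
- exact: order_idealL hI Iz.
- exact: order_idealL hI Ik.
- exact: order_idealR hI Iz.
- exact: order_idealR hI Ik.
Qed.

(* pi restricts to an isomorphism I -> Z, since elements of I fold to
   themselves. *)
Lemma pi_iso_image : monoid_iso_on I image_ideal pi.
Proof.
split=> //; first by move=> x Ix; exists x.
move=> x y Ix Iy /pi_eq[z [u [v [k [fu fv ex ey]]]]].
have Iu : I u by apply: (order_idealR (x := z) hI); rewrite -ex.
have Iv : I v by apply: (order_idealR (x := z) hI); rewrite -ey.
by rewrite ex ey (fold_idE Iu fu) (fold_idE Iv fv).
Qed.

Lemma image_quot_rel x y :
  quot_rel (ideal_sum I I') x y <-> quot_rel image_ideal (pi x) (pi y).
Proof.
split.
  move=> [s [t [Ss [St e]]]].
  exists (pi s), (pi t); rewrite -!piD e.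
  by split; [exact: image_ideal_sum | split; [exact: image_ideal_sum|]].
move=> [_ [_ [[i1 Ii1 <-] [[i2 Ii2 <-]]]]].
rewrite -!piD => /pi_eq[z [u [v [k [fu fv ex ey]]]]].
exists (i1 + v), (i2 + u); split; first exact: fold_ideal_sum fv.
split; first exact: fold_ideal_sum fu.
by rewrite !addrA ex ey addrAC.
Qed.
End Image.
End Folding.

Theorem mainTheorem9 (P : nmodType) (I I' : P -> Prop) (phi : P -> P)
  (hcon : conical P) (href : refinement_monoid P)
  (hI : order_ideal I) (hI' : order_ideal I')
  (hdisj : forall x, I x -> I' x -> x = 0)
  (hphi : monoid_iso_on I I' phi)
  (Q : nmodType) (pi : P -> Q) (hQ : crowned_pushout I phi pi) :
  [/\ (forall q : Q, exists x, pi x = q),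
      (forall x y, pi x = pi y <-> crowned_cong I phi x y),
      conical Q,
      refinement_monoid Q
    & exists Z : Q -> Prop,
        [/\ order_ideal Z,
            (exists psi : P -> Q, monoid_iso_on I Z psi)
          & forall x y, quot_rel (ideal_sum I I') x y <->
                        quot_rel Z (pi x) (pi y)]].
Proof.
have [pi_surj pi_cong] := crowned_pushout_quotient hQ.
have [[pi0 piD] _ _] := hQ.
have pi_eq x y : pi x = pi y <-> crowned_rel I phi x y.
  exact: iff_trans (pi_cong x y) (crowned_congE href hI hI' hdisj hphi x y).
split=> //.
- exact (image_conical hcon href hI hI' hdisj hphi pi0 piD pi_surj pi_eq).
- exact (image_refinement href hI hI' hphi piD pi_surj pi_eq).
exists (image_ideal I pi); split.
- exact (image_ideal_order_ideal href hI hI' hphi pi0 piD pi_surj pi_eq).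
- exists pi; exact (pi_iso_image hI hdisj hphi pi0 piD pi_eq).
- exact (image_quot_rel hI hphi piD pi_eq).
Qed.
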